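(* Let $(Q,\cdot)$ be a Ward quasigroup with $xx=e$ for all $x\in Q$, and let $(Q,\ast)$ be a magma having a unique left unit $l$. If $(Q,\cdot,\ast)$ is a double magma, i.e. $(x\cdot y)\ast(z\cdot w)=(x\ast z)\cdot(y\ast w)$ for all $x,y,z,w\in Q$, then $l=e$.
   Context: A Ward quasigroup is a quasigroup $(Q,\cdot)$ (a magma in which $ax=b$ and $ya=b$ have unique solutions for all $a,b$) satisfying $(xz)(yz)=xy$ for all $x,y,z$; in it there is an element $e$ with $xx=e$ for all $x$. A left unit of $(Q,\ast)$ is an element $l$ with $l\ast x=x$ for all $x$. *)

Definition quasigroup {Q : Type} (mul : Q -> Q -> Q) : Prop :=
  (forall a b : Q, exists! x : Q, mul a x = b) /\
  (forall a b : Q, exists! y : Q, mul y a = b).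

Definition ward_quasigroup {Q : Type} (mul : Q -> Q -> Q) : Prop :=
  quasigroup mul /\
  (forall x y z : Q, mul (mul x z) (mul y z) = mul x y).

Definition left_unit {Q : Type} (ast : Q -> Q -> Q) (l : Q) : Prop :=
  forall x : Q, ast l x = x.

Definition double_magma {Q : Type} (mul ast : Q -> Q -> Q) : Prop :=
  forall x y z w : Q, ast (mul x y) (mul z w) = mul (ast x z) (ast y w).


Lemma ward_mul_sq_r {Q : Type} (mul : Q -> Q -> Q) (e : Q) :
  ward_quasigroup mul -> (forall x : Q, mul x x = e) ->
  forall x : Q, mul x e = x.
Proof.
  (* Write x = x y; the Ward identity with z := y gives (x y)(y y) = x y. *)
  intros [[left_div _] ward] sq x.
  destruct (left_div x x) as [y [xy_eq_x _]].
  rewrite <- xy_eq_x.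
  rewrite <- (sq y).
  apply ward.
Qed.

Lemma left_unit_mul_diag {Q : Type} (mul ast : Q -> Q -> Q) (r l : Q) :
  (forall x : Q, mul x r = x) -> left_unit ast l -> double_magma mul ast ->
  left_unit ast (mul l l).
Proof.
  intros r_unit l_unit interchange x.
  rewrite <- (r_unit x), interchange, !l_unit.
  reflexivity.
Qed.

Theorem proposition2p5 (Q : Type) (mul ast : Q -> Q -> Q) (e l : Q) :
  ward_quasigroup mul ->
  (forall x : Q, mul x x = e) ->
  left_unit ast l ->
  (forall l' : Q, left_unit ast l' -> l' = l) ->
  double_magma mul ast ->
  l = e.
Proof.
  intros ward sq l_unit l_unique interchange.
  rewrite <- (sq l).
  symmetry.
  apply l_unique, (left_unit_mul_diag mul ast e); [| exact l_unit | exact interchange].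
  exact (ward_mul_sq_r mul e ward sq).
Qed.
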